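(* Let $\mathcal{P}=(\mathcal{R},\mathcal{F},\mathcal{D},\mathcal{B})$ be a ground Capacity Logic Program, let $W^{\mathcal{D}}_{\mathcal{P}}$ be its set of belief worlds and $\xi^{\mathcal{B}}:\mathbb{P}(W^{\mathcal{D}}_{\mathcal{P}})\to\mathbb{R}^2$ the capacity for sets of belief worlds. Then both $$(W^{\mathcal{D}}_{\mathcal{P}},\ \mathbb{P}(W^{\mathcal{D}}_{\mathcal{P}}),\ \mathrm{proj}_B\circ\xi^{\mathcal{B}})\quad\text{and}\quad (W^{\mathcal{D}}_{\mathcal{P}},\ \mathbb{P}(W^{\mathcal{D}}_{\mathcal{P}}),\ \mathrm{proj}_P\circ\xi^{\mathcal{B}})$$ are normalized capacity spaces; i.e. each of $\mathrm{proj}_B\circ\xi^{\mathcal{B}}$ and $\mathrm{proj}_P\circ\xi^{\mathcal{B}}$ is a capacity on $\mathbb{P}(W^{\mathcal{D}}_{\mathcal{P}})$ and takes the value $1$ on $W^{\mathcal{D}}_{\mathcal{P}}$.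
   Context: All sets are finite; there are no function symbols. Capacity: for a finite nonempty set $X$, a capacity is a function $\xi:\mathbb{P}(X)\to[0,1]$ with $\xi(\emptyset)=0$ and $A\subseteq B\Rightarrow \xi(A)\le\xi(B)$; it is normalized if $\xi(X)=1$. A (normalized) capacity space is a triple $(X,\mathbb{P}(X),\xi)$ with $\xi$ a (normalized) capacity. Belief domains: a belief domain $D$ has a finite nonempty frame of discernment $X_D$ and a mass function $\mathit{mass}(D,\cdot):\mathbb{P}(X_D)\to\mathbb{R}$ with $\mathit{mass}(D,\emptyset)=0$, $\mathit{mass}(D,A)\ge 0$ for all $A$, and $\sum_{A\subseteq X_D}\mathit{mass}(D,A)=1$. For $A\subseteq X_D$: $\mathit{Belief}(D,A)=\sum_{B\subseteq A}\mathit{mass}(D,B)$ and $\mathit{Plaus}(D,A)=1-\mathit{Belief}(D,X_D\setminus A)$. Subsets of $X_D$ are called belief events of $D$. Capacity Logic Program (CaLP): a tuple $\mathcal{P}=(\mathcal{R},\mathcal{F},\mathcal{D},\mathcal{B})$ where $\mathcal{R}$ is a finite set of ground rules, $\mathcal{F}$ is a finite set of ground probabilistic facts $p::f$ ($p\in[0,1]$, $f$ a ground atom), $\mathcal{D}$ is a finite set of belief domains, and $\mathcal{B}$ is the set of all ground belief facts $\mathit{belief}(D,B)$ with $D\in\mathcal{D}$ and $B\subseteq X_D$. A negated belief fact $\neg\,\mathit{belief}(D,B)$ is identified with $\mathit{belief}(D,X_D\setminus B)$, written $\mathit{belief}(D,\neg B)$. Canonicalization: for a set $Bel$ of belief facts,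 $\mathrm{doms}(Bel)$ is the set of domains occurring in it, and $\mathrm{canon}(Bel)=\{\mathit{belief}(D,\bigcap_{\mathit{belief}(D,B_i)\in Bel}B_i)\mid D\in\mathrm{doms}(Bel)\}$. $Bel$ is consistent if $\mathrm{canon}(Bel)$ contains no fact whose event is $\emptyset$. Belief worlds: a belief world of $\mathcal{P}$ is a tuple $w=(\mathcal{R},\mathcal{F}',\mathcal{D},\mathcal{B}')$ with $\mathcal{F}'\subseteq\mathcal{F}$ and $\mathcal{B}'\subseteq\mathcal{B}$ a consistent, canonical ($\mathrm{canon}(\mathcal{B}')=\mathcal{B}'$) set containing a belief fact for every domain in $\mathcal{D}$ (hence exactly one per domain). $W^{\mathcal{D}}_{\mathcal{P}}$ is the set of all belief worlds. Interval arithmetic: for nonnegative intervals, $[a,b]\,\widehat{\times}\,[c,d]=[ac,bd]$ and $[a,b]\,\widehat{+}\,[c,d]=[a+c,b+d]$; $\widehat{\prod}$ and $\widehat{\sum}$ are the iterated versions. Intervals are identified with elements of $\mathbb{R}^2$; $\mathrm{proj}_B([a,b])=a$ and $\mathrm{proj}_P([a,b])=b$. $\beta_{prb}$: for $\mathcal{F}'\subseteq\mathcal{F}$, $\beta_{prb}(\mathcal{F}')=\widehat{\prod}_{p::a\in\mathcal{F},\,a\in\mathcal{F}'}[p,p]\ \widehat{\times}\ \widehat{\prod}_{p::a\in\mathcal{F},\,a\notin\mathcal{F}'}[1-p,1-p]$. Upper belief domain probability: for a set $S$ of belief facts and a domain $D$, $BP^{\uparrow}(D,S)=[1,1]$ if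 $S$ contains no belief fact of domain $D$, and otherwise $BP^{\uparrow}(D,S)=[\mathit{Belief}(D,\bigcup B_i),\mathit{Plaus}(D,\bigcup B_i)]$ where the union ranges over all $B_i$ with $\mathit{belief}(D,B_i)\in S$. Capacity of sets of belief worlds: for $\mathcal{S}\subseteq W^{\mathcal{D}}_{\mathcal{P}}$, its domain partition $\mathrm{DomPrtn}(\mathcal{S})$ is the coarsest partition of $\mathcal{S}$ such that all worlds in a cell $S_i$ have the same set of probabilistic facts, denoted $\mathrm{probfacts}(S_i)$. For a cell $S_i$, $\beta_{prtn}(S_i)=\beta_{prb}(\mathrm{probfacts}(S_i))\ \widehat{\times}\ \widehat{\prod}_{D\in\mathcal{D}}BP^{\uparrow}\big(D,\bigcup_{(\mathcal{R},\mathcal{F}',\mathcal{D},\mathcal{B}')\in S_i}\mathcal{B}'\big)$ (so for each domain the belief events of that domain occurring in worlds of the cell are unioned), and $\xi^{\mathcal{B}}(\mathcal{S})=\widehat{\sum}_{S_i\in\mathrm{DomPrtn}(\mathcal{S})}\beta_{prtn}(S_i)$. *)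

From HB Require Import structures.
From mathcomp Require Import all_boot all_order all_algebra.
Set Implicit Arguments. Unset Strict Implicit. Unset Printing Implicit Defensive.
Import Order.TTheory GRing.Theory Num.Theory.
Local Open Scope ring_scope.

(* A capacity on P(X), where X is given as a subset of an ambient finite type T
   and xi is defined on all of {set T} but only its restriction to subsets of X
   matters. *)
Definition is_capacity (R : realFieldType) (T : finType) (X : {set T})
    (xi : {set T} -> R) : Prop :=
  [/\ xi set0 = 0,
      (forall A B : {set T}, A \subset B -> B \subset X -> xi A <= xi B) &
      (forall A : {set T}, A \subset X -> 0 <= xi A <= 1)].

Definition normalized_capacity_space (R : realFieldType) (T : finType)
    (X : {set T}) (xi : {set T} -> R) : Prop :=
  [/\ X != set0, is_capacity X xi & xi X = 1].

(* ---------- Intervals as elements of R^2 ---------- *)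

Definition imul (R : realFieldType) (a b : R * R) : R * R := (a.1 * b.1, a.2 * b.2).
Definition iadd (R : realFieldType) (a b : R * R) : R * R := (a.1 + b.1, a.2 + b.2).
Definition ione (R : realFieldType) : R * R := (1, 1).
Definition izero (R : realFieldType) : R * R := (0, 0).
Definition projB (R : realFieldType) (a : R * R) : R := a.1.
Definition projP (R : realFieldType) (a : R * R) : R := a.2.

Definition iprod (R : realFieldType) (I : finType) (P : pred I) (f : I -> R * R) : R * R :=
  \big[@imul R/ione R]_(i | P i) f i.
Definition isum (R : realFieldType) (I : finType) (P : pred I) (f : I -> R * R) : R * R :=
  \big[@iadd R/izero R]_(i | P i) f i.

Definition is_mass (R : realFieldType) (X : finType) (mass : {set X} -> R) : Prop :=
  [/\ mass set0 = 0, (forall A, 0 <= mass A) & \sum_(A : {set X}) mass A = 1].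

Definition Belief (R : realFieldType) (X : finType) (mass : {set X} -> R)
    (A : {set X}) : R :=
  \sum_(B : {set X} | B \subset A) mass B.

Definition Plaus (R : realFieldType) (X : finType) (mass : {set X} -> R)
    (A : {set X}) : R :=
  1 - Belief mass (~: A).

(* ---------- Ground CaLP data ----------
   - probabilistic facts: a finite index type I, fact i has probability p i;
   - belief domains: a finite index type Dom, domain d has frame X d and mass md d.
   The rules play no role in the definitions below (they are fixed in all worlds). *)

Definition beta_prb (R : realFieldType) (I : finType) (p : I -> R) (F' : {set I})
    : R * R :=
  imul (iprod (fun i => i \in F') (fun i => (p i, p i)))
       (iprod (fun i => i \notin F') (fun i => (1 - p i, 1 - p i))).

(* A (candidate) world: its set of probabilistic facts, and for every domain
   the event of the (unique, canonical) belief fact of that domain. *)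
Definition world (I Dom : finType) (X : Dom -> finType) : finType :=
  ({set I} * {dffun forall d : Dom, {set X d}})%type.

(* The set W^D_P of belief worlds: canonical sets with one belief fact per domain
   that are consistent (no empty event). *)
Definition belief_worlds (I Dom : finType) (X : Dom -> finType) : {set world I X} :=
  [set w : world I X | [forall d : Dom, w.2 d != set0]].

(* BP^up(D, S), where S is given by the set of events of the belief facts of
   domain D occurring in S. *)
Definition BPup (R : realFieldType) (X : finType) (mass : {set X} -> R)
    (evs : {set {set X}}) : R * R :=
  if evs == set0 then ione R
  else (Belief mass (\bigcup_(B in evs) B), Plaus mass (\bigcup_(B in evs) B)).

(* The cell of the domain partition of S whose worlds have probabilistic facts F'. *)
Definition cell (I Dom : finType) (X : Dom -> finType) (S : {set world I X})
    (F' : {set I}) : {set world I X} :=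
  [set w in S | (w : world I X).1 == F'].

Definition beta_prtn (R : realFieldType) (I Dom : finType) (X : Dom -> finType)
    (p : I -> R) (md : forall d : Dom, {set X d} -> R)
    (F' : {set I}) (C : {set world I X}) : R * R :=
  imul (beta_prb p F')
       (iprod predT (fun d : Dom => BPup (md d) [set (w : world I X).2 d | w in C])).

(* xi^B(S): sum over the cells of DomPrtn(S); the cells are indexed by their
   (pairwise distinct) sets of probabilistic facts. *)
Definition xiB (R : realFieldType) (I Dom : finType) (X : Dom -> finType)
    (p : I -> R) (md : forall d : Dom, {set X d} -> R)
    (S : {set world I X}) : R * R :=
  isum (fun F' : {set I} => F' \in [set (w : world I X).1 | w in S])
       (fun F' => beta_prtn p md F' (cell S F')).

(* Both projections of an interval product or sum are the ordinary product or
   sum of the projections, so proj_B o xi^B and proj_P o xi^B are sums over the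
   cells of products of a beta_prb weight and one Belief (resp. Plaus) value per
   domain. Enlarging S adds nonnegative cells and can only enlarge the event
   unions inside each cell, and Belief and Plaus are monotone. On the set of all
   worlds every set of probabilistic facts is a cell, each cell contains the
   world whose events are the whole frames, so every Belief/Plaus factor is 1
   and what remains is the sum of the beta_prb weights, which is the expansion
   of prod_i (p_i + (1 - p_i)) = 1. *)
From HB Require Import structures.
From mathcomp Require Import all_boot all_order all_algebra.
Import Order.TTheory GRing.Theory Num.Theory.
Local Open Scope ring_scope.

Lemma ler_sum_subpred {R : realFieldType} {T : finType} (P Q : pred T) (F : T -> R) :
  (forall i, P i -> Q i) -> (forall i, Q i -> 0 <= F i) ->
  \sum_(i | P i) F i <= \sum_(i | Q i) F i.
Proof.
move=> PQ F_ge0; rewrite [X in X <= _]big_mkcond [X in _ <= X]big_mkcond.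
apply: ler_sum => i _; case: ifP => [/PQ -> //|_].
by case: ifP => // /F_ge0.
Qed.

Definition iproj {R : realFieldType} (b : bool) : R * R -> R :=
  if b then @projB R else @projP R.

Section IntervalProjections.
Context {R : realFieldType}.

Lemma iproj_diag b (x : R) : iproj b (x, x) = x.
Proof. by case: b. Qed.

Lemma iproj_imul b (x y : R * R) : iproj b (imul x y) = iproj b x * iproj b y.
Proof. by case: b. Qed.

Lemma iproj_iprod b {J : finType} (P : pred J) (f : J -> R * R) :
  iproj b (iprod P f) = \prod_(j | P j) iproj b (f j).
Proof. by apply: (big_morph (iproj b)) => [x y|]; case: b. Qed.

Lemma iproj_isum b {J : finType} (P : pred J) (f : J -> R * R) :
  iproj b (isum P f) = \sum_(j | P j) iproj b (f j).
Proof. by apply: (big_morph (iproj b)) => [x y|]; case: b. Qed.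

End IntervalProjections.

Section BeliefFunctions.
Context {R : realFieldType} {X : finType} {m : {set X} -> R}.
Hypothesis m_mass : is_mass m.

Lemma Belief_ge0 (A : {set X}) : 0 <= Belief m A.
Proof. by case: m_mass => _ m_ge0 _; apply: sumr_ge0. Qed.

Lemma Belief_le1 (A : {set X}) : Belief m A <= 1.
Proof. by case: m_mass => _ m_ge0 <-; apply: ler_sum_subpred. Qed.

Lemma le_Belief (A B : {set X}) : A \subset B -> Belief m A <= Belief m B.
Proof.
case: m_mass => _ m_ge0 _ AB; apply: ler_sum_subpred => // C CA.
exact: subset_trans CA AB.
Qed.

Lemma Belief_setT : Belief m setT = 1.
Proof. by case: m_mass => _ _ <-; apply: eq_bigl => B; apply: subsetT. Qed.

Lemma Plaus_ge0 (A : {set X}) : 0 <= Plaus m A.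
Proof. by rewrite subr_ge0 Belief_le1. Qed.

Lemma le_Plaus (A B : {set X}) : A \subset B -> Plaus m A <= Plaus m B.
Proof. by move=> AB; rewrite lerB // le_Belief // setCS. Qed.

Lemma Plaus_setT : Plaus m setT = 1.
Proof.
case: m_mass => m0 _ _; rewrite /Plaus setCT /Belief (big_pred1 set0) ?m0 ?subr0 //.
by move=> B; apply: subset0.
Qed.

Lemma iproj_BPup_ge0 b (evs : {set {set X}}) : 0 <= iproj b (BPup m evs).
Proof.
rewrite /BPup; case: ifP => _; case: b => //=.
  exact: Belief_ge0.
exact: Plaus_ge0.
Qed.

Lemma iproj_BPup_mono b (evs1 evs2 : {set {set X}}) :
  evs1 != set0 -> evs1 \subset evs2 ->
  iproj b (BPup m evs1) <= iproj b (BPup m evs2).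
Proof.
move=> evs1_n0 evs12.
have evs2_n0 : evs2 != set0.
  by apply: contraNneq evs1_n0 => evs2_0; rewrite -subset0 -evs2_0.
have cup12 : \bigcup_(B in evs1) B \subset \bigcup_(B in evs2) B.
  by apply/bigcupsP => B /(subsetP evs12) B2; apply: bigcup_sup B2.
rewrite /BPup (negbTE evs1_n0) (negbTE evs2_n0); case: b => /=.
  exact: le_Belief.
exact: le_Plaus.
Qed.

Lemma BPup_setT (evs : {set {set X}}) : setT \in evs -> BPup m evs = ione R.
Proof.
move=> Tin; have evs_n0 : evs != set0 by apply/set0Pn; exists setT.
have cupT : \bigcup_(B in evs) B = setT.
  by apply/eqP; rewrite eqEsubset subsetT; apply: bigcup_sup Tin.
by rewrite /BPup (negbTE evs_n0) cupT Belief_setT Plaus_setT.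
Qed.

End BeliefFunctions.

Section ProbabilisticFacts.
Context {R : realFieldType} {I : finType} (p : I -> R).

Lemma iproj_beta_prb b (F : {set I}) :
  iproj b (beta_prb p F) = \prod_(i in F) p i * \prod_(i | i \notin F) (1 - p i).
Proof.
rewrite iproj_imul !iproj_iprod.
by congr (_ * _); apply: eq_bigr => i _; rewrite iproj_diag.
Qed.

Lemma iproj_beta_prb_ge0 b (F : {set I}) :
  (forall i, 0 <= p i <= 1) -> 0 <= iproj b (beta_prb p F).
Proof.
move=> p01; rewrite iproj_beta_prb; apply: mulr_ge0; apply: prodr_ge0 => i _.
  by case/andP: (p01 i).
by case/andP: (p01 i) => _; rewrite subr_ge0.
Qed.

Lemma sum_iproj_beta_prb b : \sum_(F : {set I}) iproj b (beta_prb p F) = 1.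
Proof.
have -> : 1 = \prod_(i : I) \sum_(j : bool) (if j then p i else 1 - p i).
  by rewrite big1 // => i _; rewrite big_bool /= addrC subrK.
rewrite bigA_distr_bigA /=.
rewrite (reindex (fun f : {ffun I -> bool} => [set i | f i])) /=; last first.
  exists (fun F : {set I} => [ffun i => i \in F]) => [f _|F _].
    by apply/ffunP => i; rewrite ffunE inE.
  by apply/setP => i; rewrite inE ffunE.
apply: eq_bigr => f _; rewrite iproj_beta_prb [RHS](bigID f) /=.
by congr (_ * _); apply: eq_big => i; rewrite ?inE //; [move=> -> | move/negbTE ->].
Qed.

End ProbabilisticFacts.

Section BeliefWorldCapacity.
Context {R : realFieldType} {I Dom : finType} {X : Dom -> finType}.
Variables (p : I -> R) (md : forall d : Dom, {set X d} -> R).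
Hypothesis p01 : forall i : I, 0 <= p i <= 1.
Hypothesis frame_n0 : forall d : Dom, [set: X d] != set0.
Hypothesis md_mass : forall d : Dom, is_mass (md d).

Local Notation world := (world I X).
Local Notation W := (belief_worlds I X).

Definition facts (S : {set world}) : {set {set I}} := [set (w : world).1 | w in S].

Definition full_world (F : {set I}) : world :=
  (F, @finfun Dom (fun d => {set X d}) (fun d => [set: X d])).

Lemma full_world_in F : full_world F \in W.
Proof. by rewrite inE; apply/forallP => d; rewrite ffunE frame_n0. Qed.

Lemma cellS (A B : {set world}) F : A \subset B -> cell A F \subset cell B F.
Proof.
by move=> AB; apply/subsetP => w; rewrite !inE => /andP[/(subsetP AB) -> ->].
Qed.

Lemma iproj_xiBE b S :
  iproj b (xiB p md S) = \sum_(F in facts S) iproj b (beta_prtn p md F (cell S F)).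
Proof. exact: iproj_isum. Qed.

Lemma iproj_beta_prtnE b F C :
  iproj b (beta_prtn p md F C) =
  iproj b (beta_prb p F) *
  \prod_(d : Dom) iproj b (BPup (md d) [set (w : world).2 d | w in C]).
Proof. by rewrite iproj_imul iproj_iprod. Qed.

Lemma iproj_beta_prtn_ge0 b F C : 0 <= iproj b (beta_prtn p md F C).
Proof.
rewrite iproj_beta_prtnE; apply: mulr_ge0; first exact: iproj_beta_prb_ge0.
by apply: prodr_ge0 => d _; exact: (iproj_BPup_ge0 (md_mass d)).
Qed.

(* Nonemptiness of the cell is what makes [BPup] monotone: an empty event set
   is sent to [1, 1], not to [0, 0]. *)
Lemma iproj_beta_prtn_mono b F (C1 C2 : {set world}) :
  C1 != set0 -> C1 \subset C2 ->
  iproj b (beta_prtn p md F C1) <= iproj b (beta_prtn p md F C2).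
Proof.
move=> /set0Pn[w wC1] C12; rewrite !iproj_beta_prtnE.
apply: ler_wpM2l; first exact: iproj_beta_prb_ge0.
apply: ler_prod => d _; rewrite (iproj_BPup_ge0 (md_mass d)) /=.
apply: (iproj_BPup_mono (md_mass d)); last exact: imsetS.
by apply/set0Pn; exists (w.2 d); apply: imset_f.
Qed.

Lemma iproj_xiB_ge0 b S : 0 <= iproj b (xiB p md S).
Proof. by rewrite iproj_xiBE; apply: sumr_ge0 => F _; apply: iproj_beta_prtn_ge0. Qed.

Lemma iproj_xiB_mono b (A B : {set world}) :
  A \subset B -> iproj b (xiB p md A) <= iproj b (xiB p md B).
Proof.
move=> AB; rewrite !iproj_xiBE.
apply: (@le_trans _ _ (\sum_(F in facts A) iproj b (beta_prtn p md F (cell B F)))).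
  apply: ler_sum => F /imsetP[w wA ->]; apply: iproj_beta_prtn_mono; last exact: cellS.
  by apply/set0Pn; exists w; rewrite inE wA /=.
apply: ler_sum_subpred => [F|F _]; first exact: (subsetP (imsetS _ AB)).
exact: iproj_beta_prtn_ge0.
Qed.

Lemma iproj_xiB0 b : iproj b (xiB p md set0) = 0.
Proof. by rewrite iproj_xiBE /facts imset0 big_set0. Qed.

Lemma iproj_xiB_worlds b : iproj b (xiB p md W) = 1.
Proof.
rewrite iproj_xiBE -(sum_iproj_beta_prb p b).
rewrite (eq_bigl predT) => [|F]; last first.
  by apply/imsetP; exists (full_world F); rewrite ?full_world_in.
apply: eq_bigr => F _; rewrite iproj_beta_prtnE big1 ?mulr1 // => d _.
rewrite (BPup_setT (md_mass d)); first by case: b.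
apply/imsetP; exists (full_world F); last by rewrite ffunE.
by rewrite inE full_world_in /=.
Qed.

Lemma normalized_capacity_space_xiB b :
  normalized_capacity_space W (fun S => iproj b (xiB p md S)).
Proof.
split; last exact: iproj_xiB_worlds.
  by apply/set0Pn; exists (full_world set0); apply: full_world_in.
split; first exact: iproj_xiB0.
  by move=> A B AB _; apply: iproj_xiB_mono.
by move=> A AW; rewrite iproj_xiB_ge0 -(iproj_xiB_worlds b) iproj_xiB_mono.
Qed.

End BeliefWorldCapacity.

Theorem mainTheorem1 (R : realFieldType) (I Dom : finType) (X : Dom -> finType)
    (p : I -> R) (md : forall d : Dom, {set X d} -> R)
    (hp : forall i : I, 0 <= p i <= 1)
    (hX : forall d : Dom, [set: X d] != set0)
    (hmass : forall d : Dom, is_mass (md d)) :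
  normalized_capacity_space (belief_worlds I X) (fun S => projB (xiB p md S)) /\
  normalized_capacity_space (belief_worlds I X) (fun S => projP (xiB p md S)).
Proof.
split.
- exact: (normalized_capacity_space_xiB p md hp hX hmass true).
- exact: (normalized_capacity_space_xiB p md hp hX hmass false).
Qed.
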